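(* For integers $r,s\ge0$ and $(a,b)\in\mathbb{Z}^2$, let $W_r(a,b)$ be the number of $r$-step nearest-neighbour walks in $\mathbb{Z}^2$ from $0$ to $(a,b)$, and let $W_{r,s}$ be the minimum of $W_r(a,b)$ over all $(a,b)$ with $|a|+|b|\le s$ and $a+b\equiv s \pmod 2$. Then for any even $\tau>0$ and $p\in[0,1]$, \[ R_\tau(p) \ge \sum_{k=0}^{\tau/2}\ \sum_{r+s=2k} \binom{r+s}{r}(1-p)^s\left(\frac{p}{4}\right)^r W_{r,s}. \] In particular, \[ R_4(p) = 1 + \frac{1}{4}p^2+\frac{1}{2}p(1-p) + \frac{9}{64}p^{4}+ \frac{9}{16}p^{3}(1-p)+\frac{3}{8} p^2(1-p)^2 . \]
   Context: A sequence of instructions is an infinite walk $(x_t)_{t\ge 0}$ in $\mathbb{Z}^2$ with $x_0=0$ and $x_{t+1}-x_t\in\{(\pm1,0),(0,\pm1)\}$. The guided random walk with error probability $p$ following it is the Markov chain $(X_t)_{t\ge0}$ with $X_0=0$ and independent increments, $X_{t+1}-X_t = x_{t+1}-x_t$ with probability $1-p$, and $X_{t+1}-X_t$ uniformly distributed on $\{(\pm1,0),(0,\pm1)\}$ with probability $p$. For a positive integer $\tau$, $R_\tau(p) := \min \mathbb{E}[\#\{t\in\{0,1,\dots,\tau\} : X_t = 0\}]$, the minimum being over all sequences of instructions. *)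

From HB Require Import structures.
From mathcomp Require Import all_boot all_order all_algebra.
From mathcomp Require Import all_classical all_reals.
Set Implicit Arguments. Unset Strict Implicit. Unset Printing Implicit Defensive.
Import Order.TTheory GRing.Theory Num.Theory.
Local Open Scope ring_scope.
Local Open Scope classical_set_scope.

Definition dirx (d : 'I_4) : int :=
  match val d with 0%N => 1 | 1%N => -1 | _ => 0 end.
Definition diry (d : 'I_4) : int :=
  match val d with 2%N => 1 | 3%N => -1 | _ => 0 end.

(* A sequence of instructions is an infinite walk starting at 0; it is
   determined by its increments x_{t+1} - x_t = step (ins t). *)
Definition instructions := nat -> 'I_4.

Definition endx (t : nat) (e : {ffun 'I_t -> 'I_4}) : int := \sum_(i < t) dirx (e i).
Definition endy (t : nat) (e : {ffun 'I_t -> 'I_4}) : int := \sum_(i < t) diry (e i).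

Definition step_prob {R : realType} (p : R) (d e : 'I_4) : R :=
  (1 - p) * (e == d)%:R + p / 4.

(* P(X_t = 0) for the guided random walk following ins (increments are
   independent, so the law of (X_1-X_0,...,X_t-X_{t-1}) is the product law). *)
Definition prob_zero {R : realType} (p : R) (ins : instructions) (t : nat) : R :=
  \sum_(e : {ffun 'I_t -> 'I_4} | (endx e == 0) && (endy e == 0))
     \prod_(i < t) step_prob p (ins i) (e i).

Definition expected_visits {R : realType} (p : R) (tau : nat) (ins : instructions) : R :=
  \sum_(t < tau.+1) prob_zero p ins t.

(* R_tau(p): minimum (= infimum, attained) over all sequences of instructions. *)
Definition Rtau {R : realType} (tau : nat) (p : R) : R :=
  inf [set expected_visits p tau ins | ins in [set: instructions]].

Definition W (r : nat) (a b : int) : nat :=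
  #|[set e : {ffun 'I_r -> 'I_4} | (endx e == a) && (endy e == b)]|.

Definition admissible (s : nat) (ab : int * int) : bool :=
  ((absz ab.1 + absz ab.2)%N <= s)%N && (odd (absz (ab.1 + ab.2)) == odd s).

Definition int_range (s : nat) : seq int :=
  [seq (k%:Z - s%:Z) | k <- iota 0 (s.*2.+1)].

(* W_{r,s}: minimum of W_r(a,b) over admissible (a,b); every admissible
   (a,b) lies in [-s,s]^2, and (s,0) is admissible, so it is a valid seed. *)
Definition Wmin (r s : nat) : nat :=
  \big[minn/W r s%:Z 0]_(ab <- [seq (a, b) | a <- int_range s, b <- int_range s]
                           | admissible s ab) W r ab.1 ab.2.

(* Expanding each factor p/4 + (1-p)[e_i = d_i] of the law of the increments splits
   the walks according to the set K of steps at which the uniform law is used.  Off K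
   the walk follows the instructions, so X_t = 0 forces the steps in K to form a
   |K|-step walk ending at minus the displacement of the instructions off K.  That
   target is admissible for s = t - |K|, so it is reached by at least W_{|K|,t-|K|}
   walks; summing over K, and over the even times t <= tau, bounds the expected number
   of visits from below.  For tau = 4 the constant instruction "east" attains the
   bound, which a finite computation of walk counts confirms. *)

From HB Require Import structures.
From mathcomp Require Import all_boot all_order all_algebra.
From mathcomp Require Import all_classical all_reals.
From mathcomp Require Import zify ring.
Import Order.TTheory GRing.Theory Num.Theory.
Set Implicit Arguments. Unset Strict Implicit. Unset Printing Implicit Defensive.
Local Open Scope ring_scope.

Section FfunCons.
Variables (T : finType) (t : nat).

Definition ffun_cons (k : T) (f : {ffun 'I_t -> T}) : {ffun 'I_t.+1 -> T} :=
  [ffun i => if unlift ord0 i is Some j then f j else k].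

Lemma ffun_cons0 k f : ffun_cons k f ord0 = k.
Proof. by rewrite ffunE unlift_none. Qed.

Lemma ffun_cons_lift k f i : ffun_cons k f (lift ord0 i) = f i.
Proof. by rewrite ffunE liftK. Qed.

Lemma big_ffun_cons (V : Type) (idx : V) (op : Monoid.com_law idx)
    (G : {ffun 'I_t.+1 -> T} -> V) :
  \big[op/idx]_(e : {ffun 'I_t.+1 -> T}) G e
  = \big[op/idx]_(k : T) \big[op/idx]_(f : {ffun 'I_t -> T}) G (ffun_cons k f).
Proof.
rewrite pair_big (reindex (fun kf : T * {ffun 'I_t -> T} => ffun_cons kf.1 kf.2)) //.
exists (fun e : {ffun 'I_t.+1 -> T} => (e ord0, [ffun i : 'I_t => e (lift ord0 i)]))
  => [[k f] _ | e _] /=.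
  by rewrite ffun_cons0; congr pair; apply/ffunP => i; rewrite ffunE ffun_cons_lift.
by apply/ffunP => i; rewrite ffunE; case: unliftP => [j ->|->]; rewrite ?ffunE.
Qed.

Lemma sum_ffun_cons (V : nmodType) (g : T -> V) k f :
  \sum_(i < t.+1) g (ffun_cons k f i) = g k + \sum_(i < t) g (f i).
Proof. by rewrite big_ord_recl ffun_cons0; under eq_bigr do rewrite ffun_cons_lift. Qed.

End FfunCons.

Lemma W_card r a b :
  W r a b = #|[set e : {ffun 'I_r -> 'I_4} | (endx e == a) && (endy e == b)]|.
Proof. by apply: eq_card => e; rewrite unfold_in /= asboolb inE. Qed.

Lemma W_sum r a b :
  W r a b = \sum_(e : {ffun 'I_r -> 'I_4}) ((endx e == a) && (endy e == b) : nat).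
Proof.
rewrite W_card -sum1_card big_mkcond.
by apply: eq_bigr => e _; rewrite inE; case: ifP.
Qed.

Lemma W0 a b : W 0 a b = ((a == 0) && (b == 0) : nat).
Proof.
rewrite W_sum (eq_bigr (fun _ => ((a == 0) && (b == 0) : nat))).
  by rewrite sum_nat_const card_ffun !card_ord expn0 mul1n.
by move=> e _; rewrite /endx /endy !big_ord0 ![0 == _]eq_sym.
Qed.

Lemma WS r a b : W r.+1 a b = (\sum_(k < 4) W r (a - dirx k) (b - diry k))%N.
Proof.
rewrite W_sum big_ffun_cons; apply: eq_bigr => k _; rewrite W_sum.
apply: eq_bigr => f _; rewrite /endx /endy !sum_ffun_cons -/(endx f) -/(endy f).
by congr (nat_of_bool (_ && _)); apply/eqP/eqP => ?; lia.
Qed.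

(* A structurally recursive walk count, which [vm_compute] evaluates. *)
Fixpoint nwalks (r : nat) (a b : int) : nat :=
  if r is r'.+1 then
    (nwalks r' (a - 1) b + nwalks r' (a + 1) b + nwalks r' a (b - 1) + nwalks r' a (b + 1))%N
  else (a == 0) && (b == 0).

Lemma W_nwalks r a b : W r a b = nwalks r a b.
Proof.
elim: r a b => [|r IH] a b; first by rewrite W0.
by rewrite WS !big_ord_recr big_ord0 /= !IH /dirx /diry /= !subr0 !opprK add0n.
Qed.

Lemma admissible_steps (T : Type) (s : seq T) (g : T -> 'I_4) :
  admissible (size s) (\sum_(x <- s) dirx (g x), \sum_(x <- s) diry (g x)).
Proof.
rewrite /admissible /=; elim: s => [|x s] /=; first by rewrite !big_nil.
rewrite !big_cons; set X := \sum_(_ <- _) _; set Y := \sum_(_ <- _) _.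
move=> /andP [XY_le /eqP XY_odd].
by case: (g x) => [[|[|[|[|m]]]] ?] //; rewrite /dirx /diry /=; apply/andP; split;
  try apply/eqP; lia.
Qed.

Lemma admissible_set t (J : {set 'I_t}) (d : 'I_t -> 'I_4) :
  admissible #|J| (\sum_(i in J) dirx (d i), \sum_(i in J) diry (d i)).
Proof. by rewrite cardE -!big_enum; apply: admissible_steps. Qed.

Lemma admissibleN s a b : admissible s (a, b) -> admissible s (- a, - b).
Proof. by rewrite /admissible /= !abszN -opprD abszN. Qed.

Lemma mem_int_range s (a : int) : (absz a <= s)%N -> a \in int_range s.
Proof.
by move=> a_le; apply/mapP; exists (absz (a + s%:Z)); [rewrite mem_iota /=|]; lia.
Qed.

Lemma Wmin_le r s a b : admissible s (a, b) -> (Wmin r s <= W r a b)%N.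
Proof.
move=> ab_adm.
apply: (ge_bigmin_seq (W r s 0) (a, b) (admissible s) (fun ab => W r ab.1 ab.2)) => //.
have ab_le : (absz a + absz b <= s)%N by case/andP: ab_adm.
by apply: (@allpairs_f _ _ _ pair); apply: mem_int_range; lia.
Qed.

Lemma Wmin_nwalks r s :
  Wmin r s = \big[minn/nwalks r s 0]_(ab <- [seq (a, b) | a <- int_range s, b <- int_range s]
                                       | admissible s ab) nwalks r ab.1 ab.2.
Proof. by rewrite /Wmin W_nwalks; apply: eq_bigr => ab _; rewrite W_nwalks. Qed.

Section ErrorSteps.
Variables (T : finType) (t : nat) (K : {set 'I_t}).

Definition agrees_off (d e : 'I_t -> T) : bool := [forall i in ~: K, e i == d i].

Definition restrict (e : 'I_t -> T) : {ffun 'I_#|K| -> T} := [ffun j => e (enum_val j)].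

Definition extend (d : 'I_t -> T) (f : {ffun 'I_#|K| -> T}) : {ffun 'I_t -> T} :=
  [ffun i => if [pick j | enum_val j == i] is Some j then f j else d i].

Lemma restrict_extend d : cancel (extend d) restrict.
Proof.
move=> f; apply/ffunP => j; rewrite !ffunE.
by case: pickP => [j' /eqP /enum_val_inj -> // | /(_ j)]; rewrite eqxx.
Qed.

Lemma agrees_off_extend d f : agrees_off d (extend d f).
Proof.
apply/forall_inP => i; rewrite inE ffunE => iNK.
by case: pickP => [j /eqP ji | _ //]; rewrite -ji enum_valP in iNK.
Qed.

Lemma extend_restrict d (e : {ffun 'I_t -> T}) : agrees_off d e -> extend d (restrict e) = e.
Proof.
move=> /forall_inP agree; apply/ffunP => i; rewrite ffunE.
case: pickP => [j /eqP <- | no_preimage]; first by rewrite ffunE.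
have iNK : i \in ~: K.
  rewrite inE; apply/negP => iK.
  by have := no_preimage (enum_rank_in iK i); rewrite enum_rankK_in ?eqxx.
by rewrite (eqP (agree i iNK)).
Qed.

Lemma sum_restrict (V : nmodType) (g : T -> V) (e : 'I_t -> T) :
  \sum_(i < t) g (e i) = \sum_(i in ~: K) g (e i) + \sum_(j < #|K|) g (restrict e j).
Proof.
rewrite (bigID (mem (~: K))) /=; congr (_ + _).
rewrite (eq_bigl (mem K)) => [|i]; last by rewrite /= inE negbK.
by rewrite big_enum_val; apply: eq_bigr => j _; rewrite ffunE.
Qed.

Lemma sum_agrees_off (V : nmodType) (g : T -> V) d e : agrees_off d e ->
  \sum_(i in ~: K) g (e i) = \sum_(i in ~: K) g (d i).
Proof. by move=> /forall_inP agree; apply: eq_bigr => i /agree /eqP ->. Qed.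

End ErrorSteps.

Section Endpoints.
Variables (t : nat) (K : {set 'I_t}) (d : 'I_t -> 'I_4) (e : {ffun 'I_t -> 'I_4}).
Hypothesis agree : agrees_off K d e.

Lemma endx_restrict : endx e = \sum_(i in ~: K) dirx (d i) + endx (restrict K e).
Proof. by rewrite /endx (sum_restrict K) (sum_agrees_off _ agree). Qed.

Lemma endy_restrict : endy e = \sum_(i in ~: K) diry (d i) + endy (restrict K e).
Proof. by rewrite /endy (sum_restrict K) (sum_agrees_off _ agree). Qed.

End Endpoints.

Lemma card_agrees_off t (K : {set 'I_t}) (d : 'I_t -> 'I_4) a b :
  #|[set e : {ffun 'I_t -> 'I_4} | [&& endx e == a, endy e == b & agrees_off K d e]]|
  = W #|K| (a - \sum_(i in ~: K) dirx (d i)) (b - \sum_(i in ~: K) diry (d i)).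
Proof.
rewrite W_card -(card_imset _ (can_inj (restrict_extend d))).
apply: eq_card => e; rewrite inE; apply/and3P/imsetP => [[/eqP ea /eqP eb agree] | [f]].
  exists (restrict K e); last by rewrite extend_restrict.
  rewrite inE -ea -eb (endx_restrict agree) (endy_restrict agree).
  by rewrite !(addrC _ (- _)) !addKr !eqxx.
rewrite inE => /andP [/eqP fa /eqP fb] ->; have agree := agrees_off_extend d f.
rewrite (endx_restrict agree) (endy_restrict agree) restrict_extend fa fb.
by rewrite !(addrC _ (_ - _)) !subrK.
Qed.

Lemma prod_nat_bool (R : comPzSemiRingType) (I : finType) (P b : pred I) :
  \prod_(i | P i) (b i)%:R = [forall (i | P i), b i]%:R :> R.
Proof.
case: (boolP [forall (i | P i), b i]) => [/forallP all_b | ].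
  by rewrite big1 // => i Pi; have := all_b i; rewrite Pi => /= ->.
rewrite negb_forall => /existsP [i]; rewrite negb_imply => /andP [Pi /negbTE bi].
by rewrite (bigD1 i Pi) /= bi mul0r.
Qed.

Lemma sum_nat_bool (R : pzSemiRingType) (I : finType) (P b : pred I) :
  \sum_(i | P i) (b i)%:R = #|[set i | P i && b i]|%:R :> R.
Proof.
rewrite -sum1_card natr_sum big_mkcond [RHS]big_mkcond /=.
by apply: eq_bigr => i _; rewrite inE; case: (P i); case: (b i).
Qed.

Lemma sum_set_card (R : pzSemiRingType) t (f : nat -> R) :
  \sum_(K : {set 'I_t}) f #|K| = \sum_(r < t.+1) 'C(t, r)%:R * f r.
Proof.
rewrite (partition_big (fun K : {set 'I_t} => inord #|K| : 'I_t.+1) xpredT) //=.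
apply: eq_bigr => r _.
have card_inord (K : {set 'I_t}) : (inord #|K| == r :> 'I_t.+1) = (#|K| == r).
  have cardK_le : (#|K| <= t)%N by have := max_card (mem K); rewrite card_ord.
  by apply/eqP/eqP => [<-|eq_r]; [rewrite inordK | apply: val_inj; rewrite /= inordK eq_r].
rewrite (eq_bigl (fun K : {set 'I_t} => #|K| == r)) => [|K]; last exact: card_inord.
rewrite (eq_bigr (fun=> f r)) => [|K /eqP ->] //.
have := card_draws 'I_t r; rewrite card_ord cardsE => <-.
by rewrite sumr_const mulr_natl.
Qed.

Lemma card_setC_ord t (K : {set 'I_t}) : #|~: K| = (t - #|K|)%N.
Proof. by have := cardsC K; rewrite card_ord; lia. Qed.

Lemma prod_step_prob (R : realType) (p : R) t (d e : 'I_t -> 'I_4) :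
  \prod_(i < t) step_prob p (d i) (e i)
  = \sum_(K : {set 'I_t}) (1 - p) ^+ (t - #|K|) * (p / 4) ^+ #|K| * (agrees_off K d e)%:R.
Proof.
rewrite (eq_bigr (fun i => p / 4 + (1 - p) * (e i == d i)%:R)) => [|i _]; last first.
  by rewrite /step_prob addrC.
rewrite bigA_distr; apply: eq_bigr => K _.
rewrite (bigID (mem K)) /= (eq_bigr (fun=> p / 4)) => [|i ->] //.
rewrite prodr_const (eq_bigr (fun i => (1 - p) * (e i == d i)%:R)) => [|i /negbTE ->] //.
rewrite (eq_bigl (fun i => i \in ~: K)) => [|i]; last by rewrite inE.
rewrite big_split /= prodr_const prod_nat_bool card_setC_ord.
by rewrite mulrA [_ * (1 - p) ^+ _]mulrC.
Qed.

Lemma prob_zero_errors (R : realType) (p : R) (ins : instructions) t :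
  prob_zero p ins t
  = \sum_(K : {set 'I_t}) (1 - p) ^+ (t - #|K|) * (p / 4) ^+ #|K|
      * (W #|K| (- \sum_(i in ~: K) dirx (ins i)) (- \sum_(i in ~: K) diry (ins i)))%:R.
Proof.
rewrite /prob_zero; under eq_bigr => e _ do rewrite (prod_step_prob p (fun i : 'I_t => ins i)).
rewrite exchange_big /=; apply: eq_bigr => K _.
have := card_agrees_off K (fun i : 'I_t => ins i) 0 0; rewrite !sub0r => <-.
rewrite -mulr_sumr sum_nat_bool; congr (_ * _%:R).
by apply: eq_card => e; rewrite !inE andbA.
Qed.

Lemma step_prob_ge0 (R : realType) (p : R) d e : 0 <= p <= 1 -> 0 <= step_prob p d e.
Proof.
by case/andP => p_ge0 p_le1; rewrite /step_prob addr_ge0 ?divr_ge0 ?mulr_ge0 ?subr_ge0 ?ler0n.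
Qed.

Lemma prob_zero_ge0 (R : realType) (p : R) ins t : 0 <= p <= 1 -> 0 <= prob_zero p ins t.
Proof.
by move=> p01; apply: sumr_ge0 => e _; apply: prodr_ge0 => i _; apply: step_prob_ge0.
Qed.

Lemma prob_zero_ge (R : realType) (p : R) ins t : 0 <= p <= 1 ->
  \sum_(r < t.+1) 'C(t, r)%:R * (1 - p) ^+ (t - r) * (p / 4) ^+ r * (Wmin r (t - r))%:R
  <= prob_zero p ins t.
Proof.
case/andP => p_ge0 p_le1; rewrite prob_zero_errors.
under eq_bigr do rewrite -!mulrA.
rewrite -(sum_set_card t (fun r => (1 - p) ^+ (t - r) * ((p / 4) ^+ r * (Wmin r (t - r))%:R))).
apply: ler_sum => K _; rewrite !mulrA; apply: ler_wpM2l.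
  by rewrite mulr_ge0 ?exprn_ge0 ?subr_ge0 ?divr_ge0.
by rewrite ler_nat -card_setC_ord; apply/Wmin_le/admissibleN/admissible_set.
Qed.

Lemma sum_even_le (R : numDomainType) (g : nat -> R) m : (forall t, 0 <= g t) ->
  \sum_(k < m.+1) g k.*2 <= \sum_(t < m.*2.+1) g t.
Proof.
move=> g_ge0; elim: m => [|m IH]; first by rewrite !big_ord1.
rewrite big_ord_recr doubleS [in X in _ <= X]big_ord_recr [in X in _ <= X]big_ord_recr /=.
by rewrite -addrA lerD // lerDr.
Qed.

Definition visits_lower_bound (R : realType) (tau : nat) (p : R) : R :=
  \sum_(k < (tau./2).+1) \sum_(r < (k.*2).+1)
     'C(k.*2, r)%:R * (1 - p) ^+ (k.*2 - r) * (p / 4) ^+ r * (Wmin r (k.*2 - r))%:R.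

Lemma expected_visits_ge (R : realType) (p : R) tau ins : ~~ odd tau -> 0 <= p <= 1 ->
  visits_lower_bound tau p <= expected_visits p tau ins.
Proof.
move=> tau_even p01.
apply: (@le_trans _ _ (\sum_(k < (tau./2).+1) prob_zero p ins k.*2)).
  by apply: ler_sum => k _; apply: prob_zero_ge.
have tau_double : tau = tau./2.*2 by rewrite -[LHS]odd_double_half (negbTE tau_even).
rewrite /expected_visits [in X in _ <= X]tau_double.
by apply: sum_even_le => t; apply: prob_zero_ge0.
Qed.

Definition east : instructions := fun=> ord0.

Lemma Rtau_ge (R : realType) tau (p : R) : ~~ odd tau -> 0 <= p <= 1 ->
  visits_lower_bound tau p <= Rtau tau p.
Proof.
move=> tau_even p01; apply: lb_le_inf => [|_ [ins _ <-]]; last exact: expected_visits_ge.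
by exists (expected_visits p tau east), east.
Qed.

Lemma Rtau_le (R : realType) tau (p : R) ins : 0 <= p <= 1 ->
  Rtau tau p <= expected_visits p tau ins.
Proof.
move=> p01; apply: ge_inf; last by exists ins.
by exists 0 => _ [ins' _ <-]; apply: sumr_ge0 => t _; apply: prob_zero_ge0.
Qed.

Lemma prob_zero_east (R : realType) (p : R) t :
  prob_zero p east t = \sum_(r < t.+1) 'C(t, r)%:R
      * ((1 - p) ^+ (t - r) * (p / 4) ^+ r * (nwalks r (- (t - r)%:Z) 0)%:R).
Proof.
pose f r := (1 - p) ^+ (t - r) * (p / 4) ^+ r * (nwalks r (- (t - r)%:Z) 0)%:R.
rewrite prob_zero_errors -(sum_set_card t f); apply: eq_bigr => K _.
by rewrite W_nwalks sumr_const card_setC_ord big1 // oppr0 natz.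
Qed.

(* Replaces every closed natural-number subterm (walk counts, binomials, exponents)
   by its value, so that [field] only sees numerals. *)
Ltac eval_closed_nats :=
  repeat match goal with
  | |- context [ GRing.natmul 1 ?n ] =>
      let m := eval vm_compute in n in progress change n with m
  | |- context [ GRing.exp ?x ?n ] =>
      let m := eval vm_compute in n in progress change n with m
  end.

Lemma expected_visits_east4 (R : realType) (p : R) :
  expected_visits p 4 east
  = 1 + p ^+ 2 / 4 + p * (1 - p) / 2 + 9 / 64 * p ^+ 4
    + 9 / 16 * p ^+ 3 * (1 - p) + 3 / 8 * p ^+ 2 * (1 - p) ^+ 2.
Proof.
rewrite /expected_visits; under eq_bigr do rewrite prob_zero_east.
by rewrite !big_ord_recr !big_ord0 /=; eval_closed_nats; field.
Qed.

Lemma visits_lower_bound4 (R : realType) (p : R) :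
  visits_lower_bound 4 p
  = 1 + p ^+ 2 / 4 + p * (1 - p) / 2 + 9 / 64 * p ^+ 4
    + 9 / 16 * p ^+ 3 * (1 - p) + 3 / 8 * p ^+ 2 * (1 - p) ^+ 2.
Proof.
rewrite /visits_lower_bound !big_ord_recr !big_ord0 /= !Wmin_nwalks unlock.
by eval_closed_nats; field.
Qed.

Theorem proposition3 (R : realType) :
  (forall (tau : nat) (p : R), (0 < tau)%N -> ~~ odd tau -> 0 <= p <= 1 ->
     \sum_(k < (tau./2).+1) \sum_(r < (k.*2).+1)
        ('C(k.*2, r))%:R * (1 - p) ^+ (k.*2 - r) * (p / 4) ^+ r
          * (Wmin r (k.*2 - r))%:R
     <= Rtau tau p) /\
  (forall p : R, 0 <= p <= 1 ->
     Rtau 4 p = 1 + p ^+ 2 / 4 + p * (1 - p) / 2 + 9 / 64 * p ^+ 4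
                + 9 / 16 * p ^+ 3 * (1 - p) + 3 / 8 * p ^+ 2 * (1 - p) ^+ 2).
Proof.
split=> [tau p _ tau_even p01 | p p01]; first exact: Rtau_ge.
apply/eqP; rewrite eq_le -{1}(expected_visits_east4 p) Rtau_le //=.
by rewrite -visits_lower_bound4 Rtau_ge.
Qed.
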